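(* For relatively prime integers $r, s$ put $u = r^2 + s^2$, $v = 2r^2 - s^2$ and $A = uv(u^2 - v^2) = -3r^2(r^2+s^2)(r^2-2s^2)(2r^2-s^2)$. Then for all but finitely many pairs $(r,s)$ of relatively prime integers with $r \neq 0$, the eight rational numbers \[ 1,\ -1,\ A,\ -A,\ uv,\ -uv,\ u^2 - v^2,\ -(u^2-v^2) \] represent eight pairwise distinct classes in $\mathbb{Q}^\times/(\mathbb{Q}^\times)^2$.
   Context: $\mathbb{Q}^\times/(\mathbb{Q}^\times)^2$ denotes the group of nonzero rationals modulo nonzero squares; two nonzero rationals represent the same class iff their quotient is a square of a rational. *)

From mathcomp Require Import all_boot all_order all_algebra.
Set Implicit Arguments. Unset Strict Implicit. Unset Printing Implicit Defensive.
Import Order.TTheory GRing.Theory Num.Theory.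
Local Open Scope ring_scope.

Definition same_sq_class (x y : rat) : Prop :=
  x != 0 /\ y != 0 /\ exists q : rat, x / y = q ^+ 2.

Definition u_of (r s : int) : rat := (r%:~R) ^+ 2 + (s%:~R) ^+ 2.
Definition v_of (r s : int) : rat := 2 * (r%:~R) ^+ 2 - (s%:~R) ^+ 2.
Definition A_of (r s : int) : rat :=
  u_of r s * v_of r s * (u_of r s ^+ 2 - v_of r s ^+ 2).

Definition eight_vals (r s : int) : seq rat :=
  [:: 1; -1; A_of r s; - A_of r s; u_of r s * v_of r s; - (u_of r s * v_of r s);
      u_of r s ^+ 2 - v_of r s ^+ 2; - (u_of r s ^+ 2 - v_of r s ^+ 2)].

Definition eight_distinct_classes (r s : int) : Prop :=
  (forall i : 'I_8, nth 0 (eight_vals r s) i != 0) /\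
  (forall i j : 'I_8, i != j ->
     ~ same_sq_class (nth 0 (eight_vals r s) i) (nth 0 (eight_vals r s) j)).

From mathcomp Require Import all_boot all_order all_algebra.
From mathcomp Require Import zify ring.
Import Order.TTheory GRing.Theory Num.Theory.
Set Implicit Arguments. Unset Strict Implicit. Unset Printing Implicit Defensive.

(* Lemma 6.1.  Put U = uv and W = u^2 - v^2, so that A = UW and the eight numbers are
   the monomials (-1)^e U^a W^b, (e, a, b) in (Z/2)^3.  The product of two such monomials
   is a square times the monomial of the xor of the indices, so they fall into eight
   distinct square classes as soon as none of -1, +-U, +-W, +-UW is a square.  We prove
   these seven facts for EVERY coprime pair (r, s) with r <> 0 (the exceptional set is
   empty):
   - -1 is negative;
   - U = (r^2 + s^2)(2r^2 - s^2) = -(r^2 + s^2)^2 = 2 is not a square modulo 3;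
   - W = 3 r^2 (2s^2 - r^2) and UW = 3 r^2 k with 3 not dividing k have odd 3-adic
     valuation, whatever their sign;
   - -U = (r^2 + s^2)(s^2 - 2r^2) is negative unless s^2 >= 2r^2; its two factors have
     a gcd dividing 3 and 3 does not divide r^2 + s^2, so a square -U is a product of two
     squares a^2 and b^2; then b^2 + 2r^2 = s^2 and b^2 + 3r^2 = a^2, and a Fermat descent
     (through the parametrisation of b^2 + 2r^2 = s^2 and the quartic
     n^2 + 4c^2d^2 = 3c^4 + d^4) shows that this system forces r = 0.
   The file develops, in order: elementary arithmetic on nat, the descent, the
   non-squares in Q, the square-class combinatorics of the monomials, the theorem. *)

Lemma odd_witness (x : nat) : odd x -> exists k, x = 2 * k + 1.
Proof. move=> ox; exists x./2; rewrite -[x in x = _]odd_double_half ox; lia. Qed.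

Lemma even_witness (x : nat) : ~~ odd x -> exists k, x = 2 * k.
Proof. move=> ex; exists x./2; rewrite -[x in x = _]odd_double_half (negbTE ex); lia. Qed.

Lemma coprime_sq_gcd (X Y Z : nat) : coprime X Y -> X * Y = Z ^ 2 -> X = gcdn X Z ^ 2.
Proof.
move=> cXY hXYZ; apply/eqP; rewrite eqn_dvd; apply/andP; split.
  rewrite expnS expn1 muln_gcdl !muln_gcdr.
  rewrite !dvdn_gcd (dvdn_mulr _ (dvdnn X)) (dvdn_mulr _ (dvdnn X)).
  by rewrite (dvdn_mull _ (dvdnn X)) mulnn -hXYZ dvdn_mulr.
have cg : coprime (gcdn X Z ^ 2) Y.
  by rewrite coprime_pexpl // (coprime_dvdl (dvdn_gcdl X Z) cXY).
by rewrite -(Gauss_dvdr _ cg) mulnC hXYZ dvdn_pexp2r // dvdn_gcdr.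
Qed.

Lemma coprime_mul_sq (X Y Z : nat) : coprime X Y -> X * Y = Z ^ 2 ->
  exists x y, [/\ X = x ^ 2, Y = y ^ 2, Z = x * y & coprime x y].
Proof.
move=> cXY h; exists (gcdn X Z), (gcdn Y Z).
have hX := coprime_sq_gcd cXY h.
have hY : Y = gcdn Y Z ^ 2.
  by apply: (@coprime_sq_gcd Y X Z); [rewrite coprime_sym | rewrite mulnC].
split=> //.
- by apply: (expIn (isT : 0 < 2)); rewrite -h expnMn -hX -hY.
- by move: cXY; rewrite {1}hX {1}hY coprime_pexpl // coprime_pexpr.
Qed.

Lemma coprime_mul_2sq (X Y R : nat) : coprime X Y -> X * Y = 2 * R ^ 2 -> ~~ odd X ->
  exists m n, [/\ X = 2 * m ^ 2, Y = n ^ 2, R = m * n & coprime m n].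
Proof.
move=> cXY hXY /even_witness [X' hX]; subst X.
have cX'Y : coprime X' Y by move: cXY; rewrite coprimeMl => /andP [].
have [m [n [hm hn hR cmn]]] : exists m n, [/\ X' = m ^ 2, Y = n ^ 2, R = m * n & coprime m n].
  by apply: coprime_mul_sq cX'Y _; apply/eqP; rewrite -(eqn_pmul2l (isT : 0 < 2)) mulnA hXY.
by exists m, n; rewrite hm.
Qed.

Lemma odd_sq_diff (N a P : nat) : odd N -> odd a -> N ^ 2 = a ^ 2 + 4 * P ->
  exists G, G * (G + a) = P /\ 2 * G + a = N.
Proof.
move=> /odd_witness [nu ->] /odd_witness [al ->] h.
have le : al <= nu by nia.
exists (nu - al); split; nia.
Qed.

Lemma coprime_of_sum_prod (X Y : nat) : coprime (X + Y) (X * Y) -> coprime X Y.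
Proof.
move=> c; rewrite /coprime -dvdn1 -(eqP c) dvdn_gcd.
by rewrite dvdn_add ?dvdn_mulr ?dvdn_gcdl ?dvdn_gcdr.
Qed.

Lemma odd_sq_mod8 (x : nat) : odd x -> exists t, x ^ 2 = 8 * t + 1.
Proof.
move=> /odd_witness [k ->]; case: (boolP (odd k)) => [/odd_witness [j ->]|/even_witness [j ->]].
  by exists (2 * j * j + 3 * j + 1); nia.
by exists (2 * j * j + j); nia.
Qed.

(* -1 is not a square modulo 3: x^2 + y^2 = 0 in Z/3 only for x = y = 0. *)
Lemma Z3_sum_sq_eq0 (x y : 'Z_3) : ((x ^+ 2 + y ^+ 2)%R == 0%R) ==> (x == 0%R) && (y == 0%R).
Proof. by case: x => [[|[|[|//]]] ?]; case: y => [[|[|[|//]]] ?]. Qed.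

Lemma natZ3_eq0 (n : nat) : ((n%:R : 'Z_3)%R == 0%R) = (3 %| n).
Proof. by rewrite -val_eqE /= val_Zp_nat. Qed.

Lemma dvd3_sum_sq (x y : nat) : 3 %| x ^ 2 + y ^ 2 -> (3 %| x) && (3 %| y).
Proof.
rewrite -!natZ3_eq0 natrD !natrX => h.
by have := Z3_sum_sq_eq0 (x%:R)%R (y%:R)%R; rewrite h.
Qed.

Lemma coprime_sum_sq_ndvd3 (x y : nat) : coprime x y -> ~~ (3 %| x ^ 2 + y ^ 2).
Proof.
move=> cxy; apply/negP => /dvd3_sum_sq /andP [h1 h2].
have : 3 %| gcdn x y by rewrite dvdn_gcd h1 h2.
by rewrite (eqP cxy).
Qed.

(* p n^2 k with p prime not dividing k has odd p-adic valuation: it is not a square. *)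
Lemma not_sq_prime_mul (p k n m : nat) : prime p -> ~~ (p %| k) -> 0 < n ->
  m ^ 2 <> p * n ^ 2 * k.
Proof.
move=> pp npk n0 h.
have k0 : 0 < k by case: k npk h => //; rewrite dvdn0.
have p0 := prime_gt0 pp.
have n2 : 0 < n ^ 2 by rewrite expn_gt0 n0.
have pn : 0 < p * n ^ 2 by rewrite muln_gt0 p0.
have := congr1 (logn p) h.
rewrite (lognM p pn k0) (lognM p p0 n2) !lognX (logn_prime p pp) eqxx.
have -> : logn p k = 0 by apply/eqP; rewrite -leqn0 leqNgt logn_gt0 mem_primes pp k0.
lia.
Qed.

Lemma coprime_of_common_dvd (X Y C D k : nat) : coprime C D -> coprime X k ->
  (forall g, g %| X -> g %| Y -> (g %| k * C) && (g %| k * D)) -> coprime X Y.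
Proof.
move=> cCD cXk H; have /andP [h1 h2] := H _ (dvdn_gcdl X Y) (dvdn_gcdr X Y).
have gk : gcdn X Y %| k.
  have : gcdn X Y %| gcdn (k * C) (k * D) by rewrite dvdn_gcd h1 h2.
  by rewrite -muln_gcdr (eqP cCD) muln1.
have : gcdn X Y %| gcdn X k by rewrite dvdn_gcd dvdn_gcdl.
by rewrite /coprime -dvdn1 (eqP cXk).
Qed.

Lemma coprime_mul_3quartic (X Y M : nat) : coprime X Y -> X * Y = 3 * M ^ 4 -> 3 %| X ->
  exists c d, [/\ X = 3 * c ^ 4, Y = d ^ 4, M = c * d & coprime c d].
Proof.
move=> cXY h /dvdnP [X' hX]; subst X.
have cX'Y : coprime X' Y by move: cXY; rewrite coprimeMl => /andP [].
have h' : X' * Y = (M ^ 2) ^ 2.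
  by apply/eqP; rewrite -(eqn_pmul2l (isT : 0 < 3)) -expnM mulnA (mulnC 3) h.
have [k [l [hk hl hM ckl]]] := coprime_mul_sq cX'Y h'.
have [c [d [hc hd hMcd ccd]]] := coprime_mul_sq ckl (esym hM).
by exists c, d; rewrite hk hl hc hd -!expnM mulnC.
Qed.

(* Factorisations of n^2 = 3C^2 - 4CD + D^2 = (C - D)(3C - D), the quartic of the
   descent read in C = c^2, D = d^2, according to the position of D. *)
Lemma quartic_factor_le (n C D : nat) : D <= C ->
  n ^ 2 + 4 * (C * D) = 3 * C ^ 2 + D ^ 2 -> n ^ 2 = (C - D) * (3 * C - D).
Proof.
move=> /subnK <-; set X := C - D.
rewrite (_ : 3 * (X + D) - D = 3 * X + 2 * D); last by lia.
have -> : 4 * ((X + D) * D) = 4 * D * D + 4 * X * D by ring.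
have -> : 3 * (X + D) ^ 2 + D ^ 2 = 4 * D * D + 4 * X * D + X * (3 * X + 2 * D) by ring.
lia.
Qed.

Lemma quartic_factor_ge (n C D : nat) : 3 * C <= D ->
  n ^ 2 + 4 * (C * D) = 3 * C ^ 2 + D ^ 2 -> n ^ 2 = (D - C) * (D - 3 * C).
Proof.
move=> /subnK <-; set Y := D - 3 * C.
rewrite (_ : Y + 3 * C - C = Y + 2 * C) ?addnK; last by lia.
have -> : 4 * (C * (Y + 3 * C)) = 4 * C * Y + 12 * C * C by ring.
have -> : 3 * C ^ 2 + (Y + 3 * C) ^ 2 = 4 * C * Y + 12 * C * C + (Y + 2 * C) * Y by ring.
lia.
Qed.

Lemma quartic_mid (n C D : nat) : C < D <= 3 * C ->
  n ^ 2 + 4 * (C * D) = 3 * C ^ 2 + D ^ 2 -> n = 0.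
Proof.
move=> /andP [/subnK <- le]; set k := D - C.+1.
have [l hl] : exists l, 3 * C = l + (k + C.+1) by exists (3 * C - (k + C.+1)); rewrite subnK.
have -> : 4 * (C * (k + C.+1)) = 4 * C * C + 4 * C * k.+1 by ring.
have -> : 3 * C ^ 2 + (k + C.+1) ^ 2 = 4 * C * C + 2 * C * k.+1 + k.+1 * k.+1 by ring.
have hkl : k.+1 * (2 * C) = k.+1 * k.+1 + k.+1 * l.
  by rewrite (_ : 2 * C = k.+1 + l); [ring | lia].
move=> heq; have /eqP : n ^ 2 = 0 by lia.
by rewrite expn_eq0 => /andP [/eqP].
Qed.

(* The quartic has no solution with n, c, d all odd: 5 <> 4 modulo 8. *)
Lemma odd_quartic_mod8 (t u v : nat) :
  8 * t + 1 + 4 * ((8 * u + 1) * (8 * v + 1)) <> 3 * (8 * u + 1) ^ 2 + (8 * v + 1) ^ 2.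
Proof.
have -> : 8 * t + 1 + 4 * ((8 * u + 1) * (8 * v + 1)) =
  8 * (t + 32 * u * v + 4 * u + 4 * v) + 5 by ring.
have -> : 3 * (8 * u + 1) ^ 2 + (8 * v + 1) ^ 2 =
  8 * (24 * u * u + 6 * u + 8 * v * v + 2 * v) + 4 by ring.
lia.
Qed.

Lemma pell2_parity (b r s : nat) : coprime b r -> b ^ 2 + 2 * r ^ 2 = s ^ 2 ->
  [/\ odd b, odd s & ~~ odd r].
Proof.
move=> cbr hs.
have ob : odd b.
  apply/negPn/negP => /even_witness [k hk].
  have or : odd r.
    apply/negPn/negP => /even_witness [j hj].
    by move: cbr; rewrite hk hj /coprime -muln_gcdr; case: (gcdn k j) => [|[|]].
  have [j hj] := odd_witness or.
  case: (boolP (odd s)) => [/odd_witness [l hl]|/even_witness [l hl]]; subst; nia.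
have os : odd s by move: (congr1 odd hs); rewrite oddD !oddX ob oddM /=.
split=> //; apply/negP => /odd_witness [j hj].
have [beta hb] := odd_witness ob; have [sig hsg] := odd_witness os.
subst; nia.
Qed.

Lemma pell2_param (b r s : nat) : coprime b r -> b ^ 2 + 2 * r ^ 2 = s ^ 2 ->
  exists m n, [/\ s = 2 * m ^ 2 + n ^ 2, r = 2 * (m * n) & coprime m n].
Proof.
move=> cbr hs; have [ob os /even_witness [R hR]] := pell2_parity cbr hs.
have [G [hG hsG]] : exists G, G * (G + b) = 2 * R ^ 2 /\ 2 * G + b = s.
  by apply: odd_sq_diff => //; rewrite -hs hR; ring.
have csr : coprime s r.
  have gb : gcdn s r %| b ^ 2.
    have : gcdn s r %| b ^ 2 + 2 * r ^ 2 by rewrite hs dvdn_exp // dvdn_gcdl.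
    by rewrite dvdn_addl // dvdn_mull // dvdn_exp // dvdn_gcdr.
  have cgr : coprime (gcdn s r) (b ^ 2).
    by rewrite coprime_pexpr // coprime_sym (coprime_dvdr (dvdn_gcdr s r)).
  by rewrite /coprime -dvdn1 -(eqP cgr) dvdn_gcd dvdnn.
have cG : coprime G (G + b).
  apply: coprime_of_sum_prod; rewrite hG (_ : G + (G + b) = s); last by lia.
  rewrite coprimeMr coprimen2 os coprime_pexpr //.
  by apply: (coprime_dvdr _ csr); rewrite hR dvdn_mull.
case: (boolP (odd G)) => oG.
  have eGb : ~~ odd (G + b) by rewrite oddD oG ob.
  have hG' : (G + b) * G = 2 * R ^ 2 by rewrite mulnC.
  have cG' : coprime (G + b) G by rewrite coprime_sym.
  have [m [n [h1 h2 h3 cmn]]] := coprime_mul_2sq cG' hG' eGb.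
  by exists m, n; rewrite hR h3 -hsG; split=> //; lia.
have [m [n [h1 h2 h3 cmn]]] := coprime_mul_2sq cG hG oG.
by exists m, n; rewrite hR h3 -hsG; split=> //; lia.
Qed.

(* With s, r as above, a^2 = s^2 + r^2 gives N^2 - a^2 = 12 m^4 for N = n^2 + 4m^2;
   halving the coprime factors of N^2 - a^2 yields m = c d and the quartic
   n^2 + 4 c^2 d^2 = 3 c^4 + d^4. *)
Lemma quartic_of_pyth (m n a : nat) : odd n -> coprime m n ->
  a ^ 2 = (2 * m ^ 2 + n ^ 2) ^ 2 + (2 * (m * n)) ^ 2 ->
  exists c d, [/\ m = c * d, coprime c d & n ^ 2 + 4 * (c ^ 2 * d ^ 2) = 3 * c ^ 4 + d ^ 4].
Proof.
move=> on cmn ha.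
set N := n ^ 2 + (2 * m) ^ 2.
have oN : odd N by rewrite /N oddD !oddX on oddM.
have oa : odd a.
  by move: (congr1 odd ha); rewrite !(oddD, oddX, oddM) on.
have [G [hG hN]] : exists G, G * (G + a) = 3 * m ^ 4 /\ 2 * G + a = N.
  by apply: odd_sq_diff => //; rewrite ha /N; ring.
have cG : coprime G (G + a).
  apply: coprime_of_sum_prod; rewrite hG (_ : G + (G + a) = N); last by lia.
  have cnm : coprime n (2 * m).
    by rewrite coprimeMr coprimen2 on coprime_sym.
  have c3 : coprime N 3 by rewrite coprime_sym prime_coprime // coprime_sum_sq_ndvd3.
  have cm : coprime N m.
    rewrite /N (_ : n ^ 2 + (2 * m) ^ 2 = (4 * m) * m + n ^ 2); last by ring.
    by rewrite coprime_sym /coprime gcdnMDl -/(coprime m (n ^ 2)) coprime_pexpr.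
  by rewrite coprimeMr c3 coprime_pexpr.
have [c [d [hsum hm ccd]]] :
    exists c d, [/\ G + (G + a) = 3 * c ^ 4 + d ^ 4, m = c * d & coprime c d].
  have : 3 %| G * (G + a) by rewrite hG dvdn_mulr.
  rewrite Euclid_dvdM // => /orP [] h3.
    have [c [d [hX hY hm ccd]]] := coprime_mul_3quartic cG hG h3.
    by exists c, d; rewrite {1}hX hY.
  have cG' : coprime (G + a) G by rewrite coprime_sym.
  have hG' : (G + a) * G = 3 * m ^ 4 by rewrite mulnC.
  have [c [d [hX hY hm ccd]]] := coprime_mul_3quartic cG' hG' h3.
  by exists c, d; rewrite hX {1}hY addnC.
exists c, d; split=> //.
have -> : 3 * c ^ 4 + d ^ 4 = N by rewrite -hsum -hN; lia.
by rewrite /N hm; ring.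
Qed.

(* f^2 + d^2 = 3 c^2 forces 3 | f, d, hence 3 | c: impossible with c, d coprime. *)
Lemma no_primitive_sum_sq_3sq (c d f : nat) : coprime c d -> f ^ 2 + d ^ 2 = 3 * c ^ 2 -> False.
Proof.
move=> ccd h.
have /dvd3_sum_sq /andP [/dvdnP [f' hf] /dvdnP [d' hd]] : 3 %| f ^ 2 + d ^ 2.
  by rewrite h dvdn_mulr.
have : 3 %| c ^ 2.
  apply/dvdnP; exists (f' ^ 2 + d' ^ 2).
  by apply/eqP; rewrite -(eqn_pmul2l (isT : 0 < 3)) -h hf hd; apply/eqP; ring.
rewrite Euclid_dvdX // => /andP [c3 _].
have : 3 %| gcdn c d by rewrite dvdn_gcd c3 hd dvdn_mull.
by rewrite (eqP ccd).
Qed.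

(* A solution of the quartic with c, d coprime and n odd gives a new solution
   (f, c, e, d) of the system b^2 + 2r^2 = s^2, b^2 + 3r^2 = a^2. *)
Section QuarticDescent.
Variables c d n : nat.
Hypotheses (ccd : coprime c d) (on : odd n).
Hypothesis quartic : n ^ 2 + 4 * (c ^ 2 * d ^ 2) = 3 * c ^ 4 + d ^ 4.
Local Notation C := (c ^ 2).
Local Notation D := (d ^ 2).

Let quarticCD : n ^ 2 + 4 * (C * D) = 3 * C ^ 2 + D ^ 2.
Proof. by rewrite -!expnM. Qed.

Let cCD : coprime C D.
Proof. by rewrite coprime_pexpl // coprime_pexpr. Qed.

(* C and D have opposite parities: both odd is excluded modulo 8, both even by
   coprimality. *)
Lemma quartic_parity : odd C != odd D.
Proof.
rewrite !oddX /=; case: (boolP (odd c)) => oc; case: (boolP (odd d)) => od //=.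
  have [t ht] := odd_sq_mod8 on; have [u hu] := odd_sq_mod8 oc.
  have [v hv] := odd_sq_mod8 od.
  by exfalso; apply: (@odd_quartic_mod8 t u v); rewrite -ht -hu -hv.
have [k hk] := even_witness oc; have [l hl] := even_witness od.
by move: ccd; rewrite hk hl /coprime -muln_gcdr; case: (gcdn k l) => [|[|]].
Qed.

(* D <= C: n^2 = (C - D)(3C - D) with coprime factors makes 3C - D = f^2, and
   f^2 + d^2 = 3c^2 is impossible. *)
Lemma quartic_not_le : D <= C -> False.
Proof.
move=> le.
have hn := quartic_factor_le le quarticCD.
have oX : odd (C - D) by rewrite oddB // -negb_eqb quartic_parity.
have cXY : coprime (C - D) (3 * C - D).
  apply: (coprime_of_common_dvd (k := 2) cCD); first by rewrite coprimen2.
  move=> g gX gY; apply/andP; split.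
    by rewrite (_ : 2 * C = (3 * C - D) - (C - D)); [exact: dvdn_sub | clear -le; lia].
  rewrite (_ : 2 * D = (3 * C - D) - 3 * (C - D)); last by clear -le; lia.
  by rewrite dvdn_sub // dvdn_mull.
have [_ [f [_ hf _ _]]] := coprime_mul_sq cXY (esym hn).
apply: (no_primitive_sum_sq_3sq (f := f) ccd).
by rewrite -hf subnK // (leq_trans le) // leq_pmull.
Qed.

(* C < D <= 3C: then n^2 = (C - D)(3C - D) <= 0, but n is odd. *)
Lemma quartic_not_mid : C < D <= 3 * C -> False.
Proof. by move=> mid; move: on; rewrite (quartic_mid mid quarticCD). Qed.

(* 3C < D: n^2 = (D - C)(D - 3C) with coprime factors e^2 and f^2 is the new solution. *)
Lemma quartic_gt : 3 * C < D -> exists e f, f ^ 2 + 2 * C = e ^ 2 /\ f ^ 2 + 3 * C = D.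
Proof.
move=> lt; have le : 3 * C <= D := ltnW lt.
have hn := quartic_factor_ge le quarticCD.
have oX : odd (D - C).
  by rewrite oddB ?(leq_trans _ le) ?leq_pmull // -negb_eqb eq_sym quartic_parity.
have cXY : coprime (D - C) (D - 3 * C).
  apply: (coprime_of_common_dvd (k := 2) cCD); first by rewrite coprimen2.
  move=> g gX gY; apply/andP; split.
    by rewrite (_ : 2 * C = (D - C) - (D - 3 * C)); [exact: dvdn_sub | clear -le; lia].
  rewrite (_ : 2 * D = 3 * (D - C) - (D - 3 * C)); last by clear -le; lia.
  by rewrite dvdn_sub // dvdn_mull.
have [e [f [he hf _ _]]] := coprime_mul_sq cXY (esym hn).
by exists e, f; split; clear -he hf le; lia.
Qed.

Lemma quartic_descent : exists e f, f ^ 2 + 2 * C = e ^ 2 /\ f ^ 2 + 3 * C = D.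
Proof.
case: (leqP D C) => [le | lt]; first by case: (quartic_not_le le).
case: (leqP D (3 * C)) => [le3 | gt3]; first by case: quartic_not_mid; rewrite lt.
exact: quartic_gt.
Qed.

End QuarticDescent.

Lemma dvd_sq_form (g x y z k : nat) : g %| x -> g %| y -> x ^ 2 + k * y ^ 2 = z ^ 2 -> g %| z.
Proof.
move=> gx gy h; rewrite -(dvdn_pexp2r _ _ (isT : 0 < 2)) -h.
by apply: dvdn_add; [exact: dvdn_exp2r | apply: dvdn_mull; exact: dvdn_exp2r].
Qed.

Lemma sq_form_div (g x y z k : nat) : 0 < g ->
  (x * g) ^ 2 + k * (y * g) ^ 2 = (z * g) ^ 2 -> x ^ 2 + k * y ^ 2 = z ^ 2.
Proof.
move=> g0 h; have g20 : 0 < g ^ 2 by rewrite expn_gt0 g0.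
apply/eqP; rewrite -(eqn_pmul2r g20); apply/eqP.
by rewrite mulnDl -mulnA -!expnMn.
Qed.

(* b^2 + 2r^2 and b^2 + 3r^2 are both squares only for r = 0: by strong induction on
   r, a non-primitive solution is divided by gcd(b, r) and a primitive one yields, via
   pell2_param, quartic_of_pyth and quartic_descent, a solution with 0 < c < r. *)
Lemma squares_2_3_trivial (r b s a : nat) :
  b ^ 2 + 2 * r ^ 2 = s ^ 2 -> b ^ 2 + 3 * r ^ 2 = a ^ 2 -> r = 0.
Proof.
elim/ltn_ind: r b s a => r IH b s a h2 h3.
case: (posnP r) => // r0; exfalso.
case: (boolP (coprime b r)) => cbr.
  have [m [n [hs hr cmn]]] := pell2_param cbr h2.
  have [_ os _] := pell2_parity cbr h2.
  have on : odd n by move: os; rewrite hs oddD oddM /= oddX.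
  have m0 : 0 < m by move: r0; rewrite hr !muln_gt0 => /andP [_ /andP []].
  have ha : a ^ 2 = (2 * m ^ 2 + n ^ 2) ^ 2 + (2 * (m * n)) ^ 2.
    by rewrite -hs -hr -h3 -h2; ring.
  have [c [d [hm ccd hq]]] := quartic_of_pyth on cmn ha.
  have [e [f [he hf]]] := quartic_descent ccd on hq.
  have /andP [c0 d0] : (0 < c) && (0 < d) by rewrite -muln_gt0 -hm.
  have cr : c < r.
    have : c <= c * (d * n) by rewrite leq_pmulr // muln_gt0 d0 odd_gt0.
    by rewrite hr hm -mulnA => le; clear -le c0; lia.
  by move: c0; rewrite (IH c cr f e d he hf).
have g0 : 0 < gcdn b r by rewrite gcdn_gt0 r0 orbT.
have g1 : 1 < gcdn b r by move: cbr; rewrite /coprime; case: (gcdn b r) g0 => [|[|]].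
have [s' hs] := dvdnP (dvd_sq_form (dvdn_gcdl b r) (dvdn_gcdr b r) h2).
have [a' ha] := dvdnP (dvd_sq_form (dvdn_gcdl b r) (dvdn_gcdr b r) h3).
have [b' hb] := dvdnP (dvdn_gcdl b r).
have [r' hr] := dvdnP (dvdn_gcdr b r).
move: (gcdn b r) g0 g1 hb hr hs ha => g g0 g1 -> -> -> -> in h2 h3 r0 IH *.
have r'0 : 0 < r' by move: r0; rewrite muln_gt0 => /andP [].
have := IH r' (ltn_Pmulr g1 r'0) b' s' a' (sq_form_div g0 h2) (sq_form_div g0 h3).
by move=> r'00; rewrite r'00 in r'0.
Qed.

Local Open Scope ring_scope.

Definition is_sq (x : rat) : Prop := exists q : rat, x = q ^+ 2.

Lemma rat_sq_int (n : int) : is_sq n%:~R -> exists m : nat, n = (m ^ 2)%N%:Z.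
Proof.
move=> [q h].
have e : numq q ^+ 2 = n * denq q ^+ 2.
  have e' : ((numq q ^+ 2)%:~R : rat) = (n * denq q ^+ 2)%:~R.
    by rewrite intrM !rmorphXn /= numqE exprMn h.
  exact: (intr_inj e').
have n0 : 0 <= n.
  have : 0 <= n * denq q ^+ 2 by rewrite -e sqr_ge0.
  by rewrite pmulr_lge0 // exprn_gt0.
have en : (`|numq q| ^ 2 = `|n| * `|denq q| ^ 2)%N by rewrite -!abszX -abszM e.
have dd : (`|denq q| %| `|numq q| ^ 2 * 1)%N.
  by rewrite muln1 en dvdn_mull // dvdn_exp.
rewrite Gauss_dvdr ?coprime_pexpr 1?coprime_sym ?coprime_num_den // dvdn1 in dd.
by exists `|numq q|%N; rewrite en (eqP dd) exp1n muln1 gez0_abs.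
Qed.

Lemma intZ3_eq0 (z : int) : ((z%:~R : 'Z_3) == 0) = (3 %| `|z|)%N.
Proof.
case: z => n; first exact: natZ3_eq0.
by rewrite NegzE intrN oppr_eq0; exact: natZ3_eq0.
Qed.

Lemma coprimez_Z3 (r s : int) : coprimez r s -> ~~ (((r%:~R : 'Z_3) == 0) && ((s%:~R : 'Z_3) == 0)).
Proof.
rewrite coprimezE !intZ3_eq0 => c; apply/negP => /andP [h1 h2].
have : (3 %| gcdn `|r| `|s|)%N by rewrite dvdn_gcd h1 h2.
by rewrite (eqP c).
Qed.

Lemma not_sq_3sq_mul (r k : int) : r != 0 -> (k%:~R : 'Z_3) != 0 -> ~ is_sq (3 * r ^+ 2 * k)%:~R.
Proof.
move=> r0 k3 /rat_sq_int [m /(congr1 absz)]; rewrite !abszM mulnn => /esym.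
by apply: (@not_sq_prime_mul 3); rewrite // ?absz_gt0 // -intZ3_eq0.
Qed.

Lemma neg_uv_not_sq_nat (R S M : nat) : coprime R S -> (0 < R)%N -> (2 * R ^ 2 <= S ^ 2)%N ->
  (M ^ 2 = (R ^ 2 + S ^ 2) * (S ^ 2 - 2 * R ^ 2))%N -> False.
Proof.
move=> cRS R0 le h.
case: (posnP (S ^ 2 - 2 * R ^ 2)) => [Y0 | Y0].
  apply: (@not_sq_prime_mul 2 1 R S) => //.
  by rewrite muln1; clear -le Y0; lia.
have cXY : coprime (R ^ 2 + S ^ 2) (S ^ 2 - 2 * R ^ 2).
  apply: (coprime_of_common_dvd (k := 3) (_ : coprime (R ^ 2) (S ^ 2))).
  - by rewrite coprime_pexpl // coprime_pexpr.
  - by rewrite coprime_sym prime_coprime // coprime_sum_sq_ndvd3.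
  move=> g gX gY; apply/andP; split.
    rewrite (_ : (3 * R ^ 2 = (R ^ 2 + S ^ 2) - (S ^ 2 - 2 * R ^ 2))%N).
      exact: dvdn_sub.
    by clear -le; lia.
  rewrite (_ : (3 * S ^ 2 = 2 * (R ^ 2 + S ^ 2) + (S ^ 2 - 2 * R ^ 2))%N).
    by rewrite dvdn_add // dvdn_mull.
  by clear -le; lia.
have [a [b [ha hb _ _]]] := coprime_mul_sq cXY (esym h).
have e2 : (b ^ 2 + 2 * R ^ 2 = S ^ 2)%N by rewrite -hb subnK.
have e3 : (b ^ 2 + 3 * R ^ 2 = a ^ 2)%N by rewrite -hb -ha; clear -le; lia.
by move: R0; rewrite (squares_2_3_trivial e2 e3).
Qed.

Lemma sq_abs (z : int) : z ^+ 2 = (`|z| ^ 2)%N%:Z.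
Proof. by rewrite -abszX gez0_abs // sqr_ge0. Qed.

Lemma neg_int_prod (a b c : nat) : Posz a = - ((Posz b + Posz c) * (2 * Posz b - Posz c)) ->
  (2 * b <= c)%N /\ a = ((b + c) * (c - 2 * b))%N.
Proof. nia. Qed.

Lemma same_sq_class_prod (x y g h : rat) :
  same_sq_class x y -> h != 0 -> x * y = g * h ^+ 2 -> is_sq g.
Proof.
move=> [_ [y0 [q xy]]] h0 e; exists (q * y / h).
apply: (mulIf (expf_neq0 2 h0)); rewrite -e expr_div_n divfK ?expf_neq0 //.
by rewrite exprMn -xy expr2 mulrA divfK.
Qed.

Lemma exprb_mul (R : comPzRingType) (x : R) (a b : bool) :
  x ^+ a * x ^+ b = x ^+ (a (+) b) * (x ^+ (a && b)) ^+ 2.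
Proof. by case: a; case: b; rewrite /= ?(expr0, expr1, expr1n, mul1r, mulr1, expr2). Qed.

Definition sign_patterns : seq (bool * bool * bool) :=
  [:: (false, false, false); (true, false, false); (false, true, true); (true, true, true);
      (false, true, false); (true, true, false); (false, false, true); (true, false, true)].

Section Monomials.
Variables U W : rat.

Definition sq_monomial (t : bool * bool * bool) : rat :=
  let: (e, a, b) := t in (-1) ^+ e * U ^+ a * W ^+ b.

Lemma sq_monomialM e a b e' a' b' :
  sq_monomial (e, a, b) * sq_monomial (e', a', b') =
  sq_monomial (e (+) e', a (+) a', b (+) b') *
  ((-1) ^+ (e && e') * U ^+ (a && a') * W ^+ (b && b')) ^+ 2.
Proof.
rewrite /=; have -> : (-1) ^+ e * U ^+ a * W ^+ b * ((-1) ^+ e' * U ^+ a' * W ^+ b') =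
  ((-1) ^+ e * (-1) ^+ e') * (U ^+ a * U ^+ a') * (W ^+ b * W ^+ b') by ring.
rewrite !exprb_mul; ring.
Qed.

Lemma nonsq_monomials :
  ~ is_sq (-1) -> ~ is_sq U -> ~ is_sq (- U) -> ~ is_sq W -> ~ is_sq (- W) ->
  ~ is_sq (U * W) -> ~ is_sq (- (U * W)) ->
  forall t, t != (false, false, false) -> ~ is_sq (sq_monomial t).
Proof.
move=> ? ? ? ? ? ? ? [[[] []] []] //= _;
  by rewrite ?(expr0, expr1, mulr1, mul1r, mulN1r, mulNr).
Qed.

Hypotheses (U0 : U != 0) (W0 : W != 0).
Hypothesis nonsq : forall t, t != (false, false, false) -> ~ is_sq (sq_monomial t).

Lemma sq_monomial_neq0 t : sq_monomial t != 0.
Proof. by case: t => [[e a] b]; rewrite !mulf_neq0 ?expf_neq0 ?signr_eq0. Qed.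

Lemma sq_monomial_classes t t' : t != t' -> ~ same_sq_class (sq_monomial t) (sq_monomial t').
Proof.
case: t t' => [[e a] b] [[e' a'] b'] ne.
have nz : (e (+) e', a (+) a', b (+) b') != (false, false, false).
  by move: ne; case: e e' a a' b b' => [] [] [] [] [] [].
move=> cl; apply: (nonsq nz).
apply: (same_sq_class_prod cl _ (sq_monomialM _ _ _ _ _ _)).
by rewrite !mulf_neq0 ?expf_neq0 ?signr_eq0.
Qed.

Lemma monomial_classes_distinct :
  (forall i : 'I_8, nth 0 (map sq_monomial sign_patterns) i != 0) /\
  (forall i j : 'I_8, i != j -> ~ same_sq_class (nth 0 (map sq_monomial sign_patterns) i)
                                              (nth 0 (map sq_monomial sign_patterns) j)).
Proof.
split=> [i|i j ij]; first by rewrite (nth_map (false, false, false)) ?sq_monomial_neq0.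
rewrite !(nth_map (false, false, false)) //.
by apply: sq_monomial_classes; rewrite nth_uniq.
Qed.

End Monomials.

Lemma eight_vals_monomials r s :
  eight_vals r s =
  map (sq_monomial (u_of r s * v_of r s) (u_of r s ^+ 2 - v_of r s ^+ 2)) sign_patterns.
Proof. by rewrite /eight_vals /A_of /= ?(expr0, expr1, mulr1, mul1r, mulN1r, mulNr). Qed.

Lemma uv_int (r s : int) :
  u_of r s * v_of r s = ((r ^+ 2 + s ^+ 2) * (2 * r ^+ 2 - s ^+ 2))%:~R.
Proof. by rewrite /u_of /v_of !(intrD, intrM, intrB, intrN, rmorphXn). Qed.

Lemma w_int (r s : int) :
  u_of r s ^+ 2 - v_of r s ^+ 2 = (3 * r ^+ 2 * (2 * s ^+ 2 - r ^+ 2))%:~R.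
Proof. by rewrite /u_of /v_of !(intrD, intrM, intrB, intrN, rmorphXn); ring. Qed.

Lemma uvw_int (r s : int) :
  u_of r s * v_of r s * (u_of r s ^+ 2 - v_of r s ^+ 2) =
  (3 * r ^+ 2 * ((r ^+ 2 + s ^+ 2) * (2 * r ^+ 2 - s ^+ 2) * (2 * s ^+ 2 - r ^+ 2)))%:~R.
Proof. by rewrite uv_int w_int -intrM; congr (_%:~R); ring. Qed.

(* For residues x, y modulo 3 not both 0: uv = -(x^2 + y^2)^2 = 2 is not a square,
   and 2y^2 - x^2 = -(x^2 + y^2) is nonzero. *)
Lemma Z3_uv_nonsq (x y m : 'Z_3) : ~~ ((x == 0) && (y == 0)) ->
  m ^+ 2 != (x ^+ 2 + y ^+ 2) * (2 * x ^+ 2 - y ^+ 2).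
Proof.
by case: x => [[|[|[|//]]] ?]; case: y => [[|[|[|//]]] ?]; case: m => [[|[|[|//]]] ?].
Qed.

Lemma Z3_uvw_neq0 (x y : 'Z_3) : ~~ ((x == 0) && (y == 0)) ->
  (2 * y ^+ 2 - x ^+ 2 != 0) &&
  ((x ^+ 2 + y ^+ 2) * (2 * x ^+ 2 - y ^+ 2) * (2 * y ^+ 2 - x ^+ 2) != 0).
Proof. by case: x => [[|[|[|//]]] ?]; case: y => [[|[|[|//]]] ?]. Qed.

Lemma neg_one_not_sq : ~ is_sq (-1).
Proof. by move=> [q e]; have := sqr_ge0 q; rewrite -e. Qed.

Lemma nonsq_neq0 (x : rat) : ~ is_sq x -> x != 0.
Proof. by move=> h; apply/eqP => x0; apply: h; exists 0; rewrite x0 expr0n. Qed.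

Lemma not_sq_pm_3sq_mul (r k : int) : r != 0 -> (k%:~R : 'Z_3) != 0 ->
  ~ is_sq (3 * r ^+ 2 * k)%:~R /\ ~ is_sq (- (3 * r ^+ 2 * k)%:~R).
Proof.
move=> r0 k3; split; first exact: not_sq_3sq_mul.
by rewrite -intrN -mulrN; apply: not_sq_3sq_mul; rewrite // intrN oppr_eq0.
Qed.

Section SevenNonSquares.
Variables r s : int.
Hypotheses (crs : coprimez r s) (r0 : r != 0).

Let rs_mod3 := coprimez_Z3 crs.

Lemma uv_not_sq : ~ is_sq (u_of r s * v_of r s).
Proof.
rewrite uv_int => /rat_sq_int [m /(congr1 (fun z : int => (z%:~R : 'Z_3)))].
rewrite !(intrD, intrM, intrB, intrN, rmorphXn) => e.
apply: (negP (Z3_uv_nonsq (m%:R) rs_mod3)); rewrite -natrX; apply/eqP; exact: (esym e).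
Qed.

Lemma neg_uv_not_sq : ~ is_sq (- (u_of r s * v_of r s)).
Proof.
rewrite uv_int -intrN => /rat_sq_int [m]; rewrite (sq_abs r) (sq_abs s).
move=> /esym /neg_int_prod [le hm].
by apply: (neg_uv_not_sq_nat _ _ le hm); rewrite -?coprimezE ?absz_gt0.
Qed.

Let w_factor_mod3 : ((2 * s ^+ 2 - r ^+ 2)%:~R : 'Z_3) != 0.
Proof.
by rewrite !(intrD, intrM, intrB, intrN, rmorphXn); case/andP: (Z3_uvw_neq0 rs_mod3).
Qed.

Let uvw_factor_mod3 :
  (((r ^+ 2 + s ^+ 2) * (2 * r ^+ 2 - s ^+ 2) * (2 * s ^+ 2 - r ^+ 2))%:~R : 'Z_3) != 0.
Proof.
by rewrite !(intrD, intrM, intrB, intrN, rmorphXn); case/andP: (Z3_uvw_neq0 rs_mod3).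
Qed.

Lemma w_not_sq : ~ is_sq (u_of r s ^+ 2 - v_of r s ^+ 2) /\
                 ~ is_sq (- (u_of r s ^+ 2 - v_of r s ^+ 2)).
Proof. by rewrite w_int; exact: not_sq_pm_3sq_mul r0 w_factor_mod3. Qed.

Lemma uvw_not_sq : ~ is_sq (u_of r s * v_of r s * (u_of r s ^+ 2 - v_of r s ^+ 2)) /\
                   ~ is_sq (- (u_of r s * v_of r s * (u_of r s ^+ 2 - v_of r s ^+ 2))).
Proof. by rewrite uvw_int; exact: not_sq_pm_3sq_mul r0 uvw_factor_mod3. Qed.

End SevenNonSquares.

Theorem lemma6p1 :
  exists S : seq (int * int),
    forall r s : int, coprimez r s -> r != 0 -> (r, s) \notin S ->
      eight_distinct_classes r s.
Proof.
exists [::] => r s crs r0 _.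
have [w_ns neg_w_ns] := w_not_sq crs r0.
have [uvw_ns neg_uvw_ns] := uvw_not_sq crs r0.
rewrite /eight_distinct_classes eight_vals_monomials.
apply: monomial_classes_distinct.
- exact: nonsq_neq0 (uv_not_sq crs).
- exact: nonsq_neq0 w_ns.
apply: nonsq_monomials => //.
- exact: neg_one_not_sq.
- exact: uv_not_sq.
- exact: neg_uv_not_sq.
Qed.
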